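(* Let $\tilde f$ be analytic on $[-1,1]$ and let $F=[f_{k,\ell}]$ be the coefficient matrix of $f(t,s)=\tilde f(t)\Theta(t-s)$. For every fixed $m\in\mathbb{Z}$, $|f_{\ell+m,\ell}|=O(1/\ell)$ as $\ell\to\infty$.
   Context: Let $\{p_k\}_{k\ge0}$ be the orthonormal Legendre polynomials on $[-1,1]$: $p_k$ has exact degree $k$, positive leading coefficient, and $\int_{-1}^1 p_k(t)p_\ell(t)\,dt=\delta_{k\ell}$. Let $\Theta$ be the Heaviside function, $\Theta(x)=0$ for $x<0$ and $\Theta(x)=1$ for $x\ge0$. The coefficient matrix of a bounded function $h$ on $[-1,1]^2$ is the infinite matrix $H=[h_{k,\ell}]_{k,\ell\ge0}$ with $h_{k,\ell}=\int_{-1}^1\int_{-1}^1 h(\tau,\rho)p_k(\tau)p_\ell(\rho)\,d\rho\,d\tau$. *)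

From Stdlib Require Import Reals ZArith.
From Coquelicot Require Import Coquelicot.
Open Scope R_scope.

Definition Heaviside (x : R) : R := if Rlt_dec x 0 then 0 else 1.

(* (P_n t, P_{n+1} t) for the classical Legendre polynomials (P_n(1) = 1),
   via Bonnet's recurrence (n+2) P_{n+2} = (2n+3) t P_{n+1} - (n+1) P_n. *)
Fixpoint legendre_pair (n : nat) (t : R) : R * R :=
  match n with
  | O => (1, t)
  | S n' => let (a, b) := legendre_pair n' t in
            (b, ((2 * INR n' + 3) * t * b - (INR n' + 1) * a) / (INR n' + 2))
  end.

Definition legendreP (n : nat) (t : R) : R := fst (legendre_pair n t).

Definition legendre_on (k : nat) (t : R) : R :=
  sqrt ((2 * INR k + 1) / 2) * legendreP k t.

Definition analytic_on_interval (f : R -> R) : Prop :=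
  forall x, -1 <= x <= 1 ->
    exists (a : nat -> R) (r : R), 0 < r /\
      forall y, Rabs (y - x) < r -> is_pseries a (y - x) (f y).

Definition coef_matrix (h : R -> R -> R) (k l : nat) : R :=
  RInt (fun tau => RInt (fun rho => h tau rho * legendre_on k tau * legendre_on l rho)
                        (-1) 1) (-1) 1.

From Stdlib Require Import Reals ZArith Lra Lia Psatz.
From Coquelicot Require Import Coquelicot.
Open Scope R_scope.

(* Writing l = n+1, the inner integral over s only sees s <= t, so
     f_{k,l} = \int_{-1}^1 ft(t) p_k(t) Q_n(t) dt,   Q_n(t) = \int_{-1}^t p_{n+1},
   and Q_n = c_n (P_{n+2} - P_n) with c_n = sqrt((2n+3)/2)/(2n+3), because
   (P_{n+2} - P_n)' = (2n+3) P_{n+1} and P_{n+2}(-1) = P_n(-1).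
   With M = sup |ft| and the pointwise inequality |a b| <= (e a^2 + b^2/e)/2
   for e = 1/l, the entry is bounded by M/2 (||p_k||^2/l + l ||Q_n||^2), where
   ||p_k|| = 1 and ||Q_n||^2 <= 2/l^2 follow from the Legendre norms
   \int P_n^2 = 2/(2n+1). This gives |f_{k,l}| <= 3M/(2l) for every k.

   Only the continuity
   (hence boundedness) of an analytic ft on [-1,1] is used. *)

(* Coquelicot states equalities of derivatives and integrals over its own
   copy of the reals; this exposes them as equalities in R for [ring]/[field]. *)
Ltac as_real_eq := match goal with |- ?a = ?b => change (@eq R a b) end.

(* Derivative rules specialised to real functions, so that unification does
   not have to guess the normed-module structure. *)
Lemma is_derive_minus_R (f g : R -> R) x a b :
  is_derive f x a -> is_derive g x b -> is_derive (fun y => f y - g y) x (a - b).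
Proof. intros; apply (is_derive_minus f g); auto. Qed.

Lemma is_derive_mult_R (f g : R -> R) x a b :
  is_derive f x a -> is_derive g x b ->
  is_derive (fun y => f y * g y) x (a * g x + f x * b).
Proof. intros; apply (is_derive_mult f g); auto. intros; apply Rmult_comm. Qed.

Lemma is_derive_id_R x : is_derive (fun y : R => y) x 1.
Proof. exact (@is_derive_id R_AbsRing x). Qed.

Lemma is_derive_const_R (c x : R) : is_derive (fun _ : R => c) x 0.
Proof. exact (@is_derive_const R_AbsRing _ c x). Qed.

Definition continuous_everywhere (f : R -> R) : Prop := forall x, continuous f x.

Lemma continuous_everywhere_mult f g :
  continuous_everywhere f -> continuous_everywhere g ->
  continuous_everywhere (fun y => f y * g y).
Proof. intros Hf Hg x; apply (continuous_mult f g); auto. Qed.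

Lemma continuous_everywhere_plus f g :
  continuous_everywhere f -> continuous_everywhere g ->
  continuous_everywhere (fun y => f y + g y).
Proof. intros Hf Hg x; apply (continuous_plus f g); auto. Qed.

Lemma continuous_everywhere_minus f g :
  continuous_everywhere f -> continuous_everywhere g ->
  continuous_everywhere (fun y => f y - g y).
Proof. intros Hf Hg x; apply (continuous_minus f g); auto. Qed.

Lemma continuous_everywhere_id : continuous_everywhere (fun y => y).
Proof. intro; apply continuous_id. Qed.

Lemma continuous_everywhere_const c : continuous_everywhere (fun _ => c).
Proof. intro; apply continuous_const. Qed.

Lemma ex_RInt_everywhere (f : R -> R) a b : continuous_everywhere f -> ex_RInt f a b.
Proof.
  intros Hf. apply (@ex_RInt_continuous R_CompleteNormedModule f a b).
  intros; apply Hf.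
Qed.

Lemma RInt_lincomb (h f g : R -> R) a b (c d : R) :
  continuous_everywhere f -> continuous_everywhere g ->
  (forall t, h t = c * f t + d * g t) ->
  RInt h a b = c * RInt f a b + d * RInt g a b.
Proof.
  intros Hf Hg Hh. apply is_RInt_unique.
  apply is_RInt_ext with (fun t => plus (scal c (f t)) (scal d (g t))).
  { intros; rewrite Hh; reflexivity. }
  apply (@is_RInt_plus R_NormedModule (fun t => scal c (f t)) (fun t => scal d (g t)));
    apply (@is_RInt_scal R_NormedModule), (@RInt_correct R_CompleteNormedModule),
          ex_RInt_everywhere; auto.
Qed.

Local Notation P := legendreP.

Lemma legendre_0 t : P 0 t = 1.
Proof. reflexivity. Qed.

Lemma legendre_1 t : P 1 t = t.
Proof. reflexivity. Qed.

Lemma legendre_rec n t :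
  P (S (S n)) t = ((2 * INR n + 3) * t * P (S n) t - (INR n + 1) * P n t) / (INR n + 2).
Proof.
  unfold legendreP. simpl.
  destruct (legendre_pair n t) as [a b]. reflexivity.
Qed.

Lemma INR_plus_2_neq_0 n : INR n + 2 <> 0.
Proof. pose proof (pos_INR n); lra. Qed.

Lemma legendre_minus_one n : P n (-1) = (-1) ^ n /\ P (S n) (-1) = (-1) ^ S n.
Proof.
  induction n as [|n [IH0 IH1]].
  - rewrite legendre_0, legendre_1. simpl. lra.
  - split; [exact IH1|].
    rewrite legendre_rec, IH0, IH1. simpl. field. apply INR_plus_2_neq_0.
Qed.

(* The derivative of P_n, defined by the classical identity
   P'_{n+1} = t P'_n + (n+1) P_n and justified by [legendre_derive]. *)
Fixpoint dlegendre (n : nat) (t : R) : R :=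
  match n with
  | O => 0
  | S m => t * dlegendre m t + INR (S m) * P m t
  end.

Local Notation dP := dlegendre.

Lemma dlegendre_weighted n t :
  (1 - t * t) * dP (S n) t = INR (S n) * (P n t - t * P (S n) t).
Proof.
  induction n as [|n IH].
  - simpl. rewrite legendre_0, legendre_1. ring.
  - change (dP (S (S n)) t) with (t * dP (S n) t + INR (S (S n)) * P (S n) t).
    replace ((1 - t * t) * (t * dP (S n) t + INR (S (S n)) * P (S n) t))
      with (t * ((1 - t * t) * dP (S n) t) + INR (S (S n)) * (1 - t * t) * P (S n) t)
      by ring.
    rewrite IH, legendre_rec, !S_INR. field. apply INR_plus_2_neq_0.
Qed.

Lemma dlegendre_shift n t : t * dP (S n) t - dP n t = INR (S n) * P (S n) t.
Proof.
  destruct n as [|n].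
  - simpl. rewrite legendre_0, legendre_1. ring.
  - change (dP (S (S n)) t) with (t * dP (S n) t + INR (S (S n)) * P (S n) t).
    replace (t * (t * dP (S n) t + INR (S (S n)) * P (S n) t) - dP (S n) t)
      with (- ((1 - t * t) * dP (S n) t) + INR (S (S n)) * t * P (S n) t) by ring.
    rewrite dlegendre_weighted, legendre_rec, !S_INR. field. apply INR_plus_2_neq_0.
Qed.

Lemma dlegendre_step n t :
  dP (S (S n)) t - dP n t = (2 * INR (S n) + 1) * P (S n) t.
Proof.
  change (dP (S (S n)) t) with (t * dP (S n) t + INR (S (S n)) * P (S n) t).
  pose proof (dlegendre_shift n t). rewrite !S_INR in *. lra.
Qed.

Lemma dlegendre_rec n t :
  dP (S (S n)) t =
  ((2 * INR n + 3) * (1 * P (S n) t + t * dP (S n) t) - (INR n + 1) * dP n t)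
    / (INR n + 2).
Proof.
  change (dP (S (S n)) t) with (t * dP (S n) t + INR (S (S n)) * P (S n) t).
  pose proof (dlegendre_shift n t) as Hshift.
  replace (t * dP (S n) t) with (dP n t + INR (S n) * P (S n) t) by lra.
  rewrite !S_INR. field. apply INR_plus_2_neq_0.
Qed.

Lemma legendre_derive n t : is_derive (P n) t (dP n t).
Proof.
  revert t. induction n as [n IH] using lt_wf_ind. intros t.
  destruct n as [|[|n]].
  - apply is_derive_ext with (fun _ => 1); [reflexivity | apply is_derive_const_R].
  - apply is_derive_ext with (fun y => y); [reflexivity|].
    replace (dP 1 t) with 1 by (simpl; rewrite legendre_0; ring). apply is_derive_id_R.
  - apply is_derive_ext with
      (fun y => / (INR n + 2) * ((2 * INR n + 3) * (y * P (S n) y) - (INR n + 1) * P n y)).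
    { intros y. rewrite legendre_rec. as_real_eq. field. apply INR_plus_2_neq_0. }
    rewrite dlegendre_rec. unfold Rdiv. rewrite (Rmult_comm _ (/ _)).
    apply is_derive_scal, is_derive_minus_R; apply is_derive_scal.
    + apply (is_derive_mult_R (fun y => y)); [apply is_derive_id_R | apply IH; lia].
    + apply IH; lia.
Qed.

Lemma legendre_continuous n : continuous_everywhere (P n).
Proof.
  intro x. apply (@ex_derive_continuous R_AbsRing R_NormedModule).
  eexists. apply legendre_derive.
Qed.

Lemma dlegendre_continuous n : continuous_everywhere (dP n).
Proof.
  induction n as [|n IH].
  - apply continuous_everywhere_const.
  - apply (continuous_everywhere_plus (fun y => y * dP n y) (fun y => INR (S n) * P n y)).
    + apply (continuous_everywhere_mult (fun y => y)); [apply continuous_everywhere_id | exact IH].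
    + apply (continuous_everywhere_mult (fun _ => INR (S n)));
        [apply continuous_everywhere_const | apply legendre_continuous].
Qed.

Ltac solve_continuity := lazymatch goal with
  | |- continuous_everywhere (fun y => @?f y * @?g y) =>
      apply (continuous_everywhere_mult f g); solve_continuity
  | |- continuous_everywhere (fun y => @?f y + @?g y) =>
      apply (continuous_everywhere_plus f g); solve_continuity
  | |- continuous_everywhere (fun y => @?f y - @?g y) =>
      apply (continuous_everywhere_minus f g); solve_continuity
  | |- continuous_everywhere (fun y => y) => exact continuous_everywhere_id
  | |- continuous_everywhere (fun y => P ?n y) => exact (legendre_continuous n)
  | |- continuous_everywhere (fun y => dP ?n y) => exact (dlegendre_continuous n)
  | |- continuous_everywhere (fun _ => ?c) => exact (continuous_everywhere_const c)
  | |- continuous_everywhere (P ?n) => exact (legendre_continuous n)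
  | |- continuous_everywhere (dP ?n) => exact (dlegendre_continuous n)
  end.

Lemma legendre_ode n t :
  is_derive (fun y => (1 - y * y) * dP n y) t (- (INR n * (INR n + 1)) * P n t).
Proof.
  destruct n as [|n].
  - apply is_derive_ext with (fun _ => 0); [intros; simpl; as_real_eq; ring|].
    replace (- (INR 0 * (INR 0 + 1)) * P 0 t) with 0 by (simpl; ring).
    apply is_derive_const_R.
  - apply is_derive_ext with (fun y => INR (S n) * (P n y - y * P (S n) y)).
    { intros; as_real_eq; rewrite dlegendre_weighted; ring. }
    replace (- (INR (S n) * (INR (S n) + 1)) * P (S n) t)
      with (INR (S n) * (dP n t - (1 * P (S n) t + t * dP (S n) t))).
    + apply is_derive_scal, is_derive_minus_R; [apply legendre_derive|].
      apply (is_derive_mult_R (fun y => y)); [apply is_derive_id_R | apply legendre_derive].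
    + pose proof (dlegendre_shift n t). rewrite !S_INR in *. nra.
Qed.

Definition legendre_inner (m n : nat) : R := RInt (fun t => P m t * P n t) (-1) 1.

(* Integration by parts against the Legendre equation; the boundary term
   vanishes because of the factor 1 - t^2. *)
Lemma legendre_energy m n :
  RInt (fun t => dP m t * ((1 - t * t) * dP n t)) (-1) 1
  = INR n * (INR n + 1) * legendre_inner m n.
Proof.
  assert (Hparts : RInt (fun y => dP m y * ((1 - y * y) * dP n y)
                                  + P m y * (- (INR n * (INR n + 1)) * P n y)) (-1) 1 = 0).
  { apply is_RInt_unique.
    replace 0 with (minus (P m 1 * ((1 - 1 * 1) * dP n 1))
                          (P m (-1) * ((1 - (-1) * (-1)) * dP n (-1))))
      by (unfold minus, plus, opp; simpl; ring).
    apply (is_RInt_derive (fun y => P m y * ((1 - y * y) * dP n y))).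
    - intros x _.
      apply (is_derive_mult_R (P m) (fun y => (1 - y * y) * dP n y));
        [apply legendre_derive | apply legendre_ode].
    - intros x _. revert x.
      change (continuous_everywhere (fun y => dP m y * ((1 - y * y) * dP n y)
                                    + P m y * (- (INR n * (INR n + 1)) * P n y))).
      solve_continuity. }
  rewrite (RInt_lincomb _ (fun t => dP m t * ((1 - t * t) * dP n t)) (fun t => P m t * P n t)
             _ _ 1 (- (INR n * (INR n + 1)))) in Hparts;
    [unfold legendre_inner; lra | solve_continuity | solve_continuity | intros; ring].
Qed.

(* Orthogonality: the energy form is symmetric while n(n+1) separates indices. *)
Lemma legendre_orthogonal m n : m <> n -> legendre_inner m n = 0.
Proof.
  intros Hmn.
  pose proof (legendre_energy m n) as Emn. pose proof (legendre_energy n m) as Enm.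
  rewrite (RInt_ext _ (fun t => dP m t * ((1 - t * t) * dP n t))) in Enm
    by (intros; as_real_eq; ring).
  replace (legendre_inner n m) with (legendre_inner m n) in Enm
    by (unfold legendre_inner; apply RInt_ext; intros; as_real_eq; ring).
  assert (Hne : INR n * (INR n + 1) <> INR m * (INR m + 1)).
  { intro E. apply Hmn. rewrite <- !S_INR, <- !mult_INR in E. apply INR_eq in E. nia. }
  assert (Hz : (INR n * (INR n + 1) - INR m * (INR m + 1)) * legendre_inner m n = 0) by lra.
  apply Rmult_integral in Hz. destruct Hz; [lra | auto].
Qed.

(* The mixed moment \int t P_{n+1} P_n, which links consecutive norms. *)
Definition legendre_moment (n : nat) : R :=
  RInt (fun t => t * P (S n) t * P n t) (-1) 1.

(* (2n+3) \int t P_{n+1} P_n = (n+1) ||P_n||^2: expand P_{n+2} by the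
   recurrence in <P_{n+2}, P_n> = 0. *)
Lemma legendre_moment_norm n :
  (2 * INR n + 3) * legendre_moment n = (INR n + 1) * legendre_inner n n.
Proof.
  pose proof (legendre_orthogonal (S (S n)) n ltac:(lia)) as Hortho.
  unfold legendre_inner in Hortho.
  rewrite (RInt_lincomb _ (fun t => t * P (S n) t * P n t) (fun t => P n t * P n t) _ _
     ((2 * INR n + 3) / (INR n + 2)) (- (INR n + 1) / (INR n + 2))) in Hortho.
  - fold (legendre_moment n) in Hortho. unfold legendre_inner.
    apply Rmult_eq_reg_l with (/ (INR n + 2));
      [| apply Rinv_neq_0_compat, INR_plus_2_neq_0].
    unfold Rdiv in Hortho. lra.
  - solve_continuity.
  - solve_continuity.
  - intros; rewrite legendre_rec. field. apply INR_plus_2_neq_0.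
Qed.

(* (n+1) ||P_{n+1}||^2 = (2n+1) \int t P_{n+1} P_n: expand one factor of P_{n+1}
   by the recurrence; its P_{n-1} part is orthogonal to P_{n+1}. *)
Lemma legendre_norm_moment n :
  (INR n + 1) * legendre_inner (S n) (S n) = (2 * INR n + 1) * legendre_moment n.
Proof.
  unfold legendre_inner, legendre_moment. destruct n as [|n].
  - replace (2 * INR 0 + 1) with (INR 0 + 1) by (simpl; ring).
    apply Rmult_eq_compat_l, RInt_ext. intros.
    rewrite legendre_0, legendre_1. as_real_eq. ring.
  - pose proof (legendre_orthogonal n (S (S n)) ltac:(lia)) as Hortho.
    unfold legendre_inner in Hortho.
    rewrite (RInt_lincomb _ (fun t => t * P (S (S n)) t * P (S n) t)
               (fun t => P n t * P (S (S n)) t) _ _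
               ((2 * INR n + 3) / (INR n + 2)) (- (INR n + 1) / (INR n + 2))).
    + rewrite Hortho, !S_INR. field. apply INR_plus_2_neq_0.
    + solve_continuity.
    + solve_continuity.
    + intros. rewrite legendre_rec at 1. field. apply INR_plus_2_neq_0.
Qed.

Lemma legendre_norm n : legendre_inner n n = 2 / (2 * INR n + 1).
Proof.
  induction n as [|n IH].
  - unfold legendre_inner. rewrite (RInt_ext _ (fun _ => 1)).
    + rewrite RInt_const. simpl. unfold scal; simpl. unfold mult; simpl. as_real_eq. field.
    + intros; rewrite legendre_0; as_real_eq; ring.
  - pose proof (legendre_norm_moment n) as Hnm. pose proof (legendre_moment_norm n) as Hmn.
    rewrite IH in Hmn. rewrite S_INR.
    pose proof (pos_INR n).
    apply Rmult_eq_reg_l with ((INR n + 1) * (2 * INR n + 3)); [| nra].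
    rewrite Rmult_assoc, (Rmult_comm (2 * INR n + 3)), <- Rmult_assoc, Hnm.
    replace ((2 * INR n + 1) * legendre_moment n * (2 * INR n + 3))
      with ((2 * INR n + 1) * ((2 * INR n + 3) * legendre_moment n)) by ring.
    rewrite Hmn. field. lra.
Qed.

Lemma legendre_on_eq k t : legendre_on k t = sqrt ((2 * INR k + 1) / 2) * P k t.
Proof. reflexivity. Qed.

Lemma legendre_on_continuous k : continuous_everywhere (legendre_on k).
Proof.
  apply (continuous_everywhere_mult (fun _ => _) (P k));
    [apply continuous_everywhere_const | apply legendre_continuous].
Qed.

Lemma legendre_on_norm k : RInt (fun t => legendre_on k t * legendre_on k t) (-1) 1 = 1.
Proof.
  set (c := (2 * INR k + 1) / 2).
  assert (Hc : sqrt c * sqrt c = c) by (apply sqrt_sqrt; unfold c; pose proof (pos_INR k); lra).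
  rewrite (RInt_lincomb _ (fun t => P k t * P k t) (fun t => P k t * P k t) _ _ c 0).
  - fold (legendre_inner k k). rewrite legendre_norm. unfold c.
    as_real_eq. field. pose proof (pos_INR k); lra.
  - solve_continuity.
  - solve_continuity.
  - intros t. rewrite legendre_on_eq. fold c.
    replace (sqrt c * P k t * (sqrt c * P k t)) with ((sqrt c * sqrt c) * (P k t * P k t))
      by ring.
    rewrite Hc. ring.
Qed.

(* Q_n(t) = \int_{-1}^t p_{n+1}, in closed form. *)
Definition legendre_primitive (n : nat) (t : R) : R :=
  sqrt ((2 * INR (S n) + 1) / 2) * (P (S (S n)) t - P n t) / (2 * INR (S n) + 1).

Lemma legendre_primitive_continuous n : continuous_everywhere (legendre_primitive n).
Proof.
  unfold legendre_primitive, Rdiv.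
  change (continuous_everywhere
            (fun t => sqrt ((2 * INR (S n) + 1) / 2) * (P (S (S n)) t - P n t)
                      * / (2 * INR (S n) + 1))).
  solve_continuity.
Qed.

(* Fundamental theorem of calculus with [dlegendre_step]; the constant term
   vanishes since P_{n+2}(-1) = P_n(-1). *)
Lemma RInt_legendre_on n t : RInt (legendre_on (S n)) (-1) t = legendre_primitive n t.
Proof.
  set (s := sqrt ((2 * INR (S n) + 1) / 2)).
  assert (Hc : 2 * INR (S n) + 1 <> 0) by (pose proof (pos_INR (S n)); lra).
  apply is_RInt_unique.
  replace (legendre_primitive n t)
    with (minus (legendre_primitive n t) (legendre_primitive n (-1))).
  2:{ unfold minus, plus, opp; simpl. unfold legendre_primitive.
      destruct (legendre_minus_one n) as [Hn _].
      destruct (legendre_minus_one (S n)) as [_ Hn2].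
      rewrite Hn, Hn2. simpl. as_real_eq. field. exact Hc. }
  apply (is_RInt_derive (legendre_primitive n)).
  - intros x _. unfold legendre_primitive. fold s.
    apply is_derive_ext with (fun y => (s / (2 * INR (S n) + 1)) * (P (S (S n)) y - P n y)).
    { intros; as_real_eq; field; exact Hc. }
    replace (legendre_on (S n) x)
      with ((s / (2 * INR (S n) + 1)) * (dP (S (S n)) x - dP n x)).
    + apply is_derive_scal, is_derive_minus_R; apply legendre_derive.
    + rewrite dlegendre_step, legendre_on_eq. fold s. field. exact Hc.
  - intros x _. apply legendre_on_continuous.
Qed.

(* The arithmetic behind [legendre_primitive_norm]: with l = n+1,
   ||Q_n||^2 <= (||P_{n+2}||^2 + ||P_n||^2) / (2l+1) = 4 / ((2l+3)(2l-1)) <= 2/l^2. *)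
Lemma primitive_norm_arith L :
  1 <= L ->
  / (2 * L + 1) * (2 / (2 * (L + 1) + 1)) + / (2 * L + 1) * (2 / (2 * (L - 1) + 1))
  <= 2 / (L * L).
Proof.
  intros HL.
  replace (/ (2 * L + 1) * (2 / (2 * (L + 1) + 1)) + / (2 * L + 1) * (2 / (2 * (L - 1) + 1)))
    with (4 / ((2 * L + 3) * (2 * L - 1))) by (field; lra).
  apply Rmult_le_reg_r with ((2 * L + 3) * (2 * L - 1) * (L * L)); [nra|].
  replace (4 / ((2 * L + 3) * (2 * L - 1)) * ((2 * L + 3) * (2 * L - 1) * (L * L)))
    with (4 * (L * L)) by (field; lra).
  replace (2 / (L * L) * ((2 * L + 3) * (2 * L - 1) * (L * L)))
    with (2 * ((2 * L + 3) * (2 * L - 1))) by (field; lra).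
  nra.
Qed.

(* ||Q_n||^2 <= 2/(n+1)^2, using (A - B)^2 <= 2 (A^2 + B^2) and the norms of
   P_{n+2} and P_n. *)
Lemma legendre_primitive_norm n :
  RInt (fun t => legendre_primitive n t * legendre_primitive n t) (-1) 1
  <= 2 / (INR (S n) * INR (S n)).
Proof.
  set (L := INR (S n)).
  assert (HL : 1 <= L) by (unfold L; rewrite S_INR; pose proof (pos_INR n); lra).
  set (s := sqrt ((2 * L + 1) / 2)).
  assert (Hs : s * s = (2 * L + 1) / 2) by (apply sqrt_sqrt; lra).
  set (w := 2 * (s / (2 * L + 1)) * (s / (2 * L + 1))).
  assert (Hprim : continuous_everywhere
                    (fun t => legendre_primitive n t * legendre_primitive n t))
    by (apply continuous_everywhere_mult; apply legendre_primitive_continuous).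
  apply Rle_trans with
    (RInt (fun t => w * (P (S (S n)) t * P (S (S n)) t) + w * (P n t * P n t)) (-1) 1).
  { apply RInt_le; [lra | apply ex_RInt_everywhere; auto
                   | apply ex_RInt_everywhere; solve_continuity |].
    intros t _. unfold legendre_primitive. fold L s. unfold w.
    set (A := P (S (S n)) t). set (B := P n t).
    replace (s * (A - B) / (2 * L + 1) * (s * (A - B) / (2 * L + 1)))
      with ((s / (2 * L + 1)) * (s / (2 * L + 1)) * ((A - B) * (A - B))) by (field; lra).
    assert (0 <= (s / (2 * L + 1)) * (s / (2 * L + 1))) by apply Rle_0_sqr.
    pose proof (Rle_0_sqr (A + B)). unfold Rsqr in *. nra. }
  rewrite (RInt_lincomb _ (fun t => P (S (S n)) t * P (S (S n)) t) (fun t => P n t * P n t)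
             _ _ w w); [| solve_continuity | solve_continuity | reflexivity].
  fold (legendre_inner (S (S n)) (S (S n))) (legendre_inner n n).
  rewrite !legendre_norm. replace (INR (S (S n))) with (L + 1) by (unfold L; rewrite !S_INR; ring).
  replace (INR n) with (L - 1) by (unfold L; rewrite !S_INR; ring).
  replace w with (/ (2 * L + 1)).
  - apply primitive_norm_arith. exact HL.
  - unfold w. replace (2 * (s / (2 * L + 1)) * (s / (2 * L + 1)))
      with (2 * (s * s) / ((2 * L + 1) * (2 * L + 1))) by (field; lra).
    rewrite Hs. field. lra.
Qed.

Lemma heaviside_pos x : 0 < x -> Heaviside x = 1.
Proof. intros. unfold Heaviside. destruct (Rlt_dec x 0); [lra | auto]. Qed.

Lemma heaviside_neg x : x < 0 -> Heaviside x = 0.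
Proof. intros. unfold Heaviside. destruct (Rlt_dec x 0); [auto | lra]. Qed.

Lemma RInt_heaviside_cutoff (a b tau : R) (g : R -> R) :
  continuous_everywhere g -> -1 <= tau <= 1 ->
  RInt (fun rho => a * Heaviside (tau - rho) * b * g rho) (-1) 1 = a * b * RInt g (-1) tau.
Proof.
  intros Hg Htau.
  set (f := fun rho => a * Heaviside (tau - rho) * b * g rho).
  assert (Ebelow : forall x, Rmin (-1) tau < x < Rmax (-1) tau -> a * b * g x = f x).
  { intros x Hx. rewrite Rmin_left, Rmax_right in Hx by lra.
    unfold f. rewrite heaviside_pos by lra. ring. }
  assert (Eabove : forall x, Rmin tau 1 < x < Rmax tau 1 -> (fun _ => 0) x = f x).
  { intros x Hx. rewrite Rmin_left, Rmax_right in Hx by lra.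
    unfold f. rewrite heaviside_neg by lra. ring. }
  assert (Hab : continuous_everywhere (fun rho => a * b * g rho)).
  { apply (continuous_everywhere_mult (fun _ => a * b)); auto.
    apply continuous_everywhere_const. }
  rewrite <- (RInt_Chasles f (-1) tau 1).
  - rewrite <- (RInt_ext _ _ _ _ Ebelow), <- (RInt_ext _ _ _ _ Eabove), RInt_const.
    rewrite (RInt_lincomb (fun rho => a * b * g rho) g g (-1) tau (a * b) 0);
      [| auto | auto | intros; ring].
    unfold plus, scal; simpl. unfold mult; simpl. as_real_eq. ring.
  - apply (ex_RInt_ext _ _ _ _ Ebelow), ex_RInt_everywhere; auto.
  - apply (ex_RInt_ext _ _ _ _ Eabove), ex_RInt_everywhere, continuous_everywhere_const.
Qed.

Lemma coef_matrix_volterra (ft : R -> R) k n :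
  coef_matrix (fun t s => ft t * Heaviside (t - s)) k (S n)
  = RInt (fun tau => ft tau * legendre_on k tau * legendre_primitive n tau) (-1) 1.
Proof.
  unfold coef_matrix. apply RInt_ext. intros tau Htau.
  rewrite Rmin_left, Rmax_right in Htau by lra.
  rewrite RInt_heaviside_cutoff, RInt_legendre_on;
    [as_real_eq; ring | apply legendre_on_continuous | lra].
Qed.

Lemma abs_product_le_amgm a b c M e :
  Rabs a <= M -> 0 < e -> Rabs (a * b * c) <= M / 2 * e * (b * b) + M / 2 / e * (c * c).
Proof.
  intros HM He.
  assert (Hbc : Rabs (b * c) <= (e * (b * b) + c * c / e) / 2).
  { rewrite Rabs_mult. apply Rmult_le_reg_r with (2 * e); [lra|].
    replace ((e * (b * b) + c * c / e) / 2 * (2 * e)) with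
      (e * e * (Rabs b * Rabs b) + Rabs c * Rabs c)
      by (rewrite <- !Rabs_mult, !Rabs_pos_eq by nra; field; lra).
    pose proof (Rle_0_sqr (e * Rabs b - Rabs c)). unfold Rsqr in *. nra. }
  rewrite Rmult_assoc, Rabs_mult.
  apply Rle_trans with (M * ((e * (b * b) + c * c / e) / 2)).
  - apply Rmult_le_compat; auto using Rabs_pos.
  - right. field. lra.
Qed.

Lemma RInt_product_bound (f g h : R -> R) (M e : R) :
  (forall x, -1 <= x <= 1 -> continuous f x) ->
  (forall x, -1 <= x <= 1 -> Rabs (f x) <= M) ->
  continuous_everywhere g -> continuous_everywhere h -> 0 < e ->
  Rabs (RInt (fun t => f t * g t * h t) (-1) 1)
  <= M / 2 * (e * RInt (fun t => g t * g t) (-1) 1 + RInt (fun t => h t * h t) (-1) 1 / e).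
Proof.
  intros Hf HM Hg Hh He.
  assert (Hcont : forall x, Rmin (-1) 1 <= x <= Rmax (-1) 1 ->
                            continuous (fun t => f t * g t * h t) x).
  { intros x Hx. rewrite Rmin_left, Rmax_right in Hx by lra.
    apply (continuous_mult (fun t => f t * g t) h); [apply (continuous_mult f g)|]; auto. }
  apply Rle_trans with (RInt (fun t => Rabs (f t * g t * h t)) (-1) 1).
  { apply abs_RInt_le; [lra | apply (@ex_RInt_continuous R_CompleteNormedModule); auto]. }
  replace (M / 2 * (e * RInt (fun t => g t * g t) (-1) 1 + RInt (fun t => h t * h t) (-1) 1 / e))
    with (M / 2 * e * RInt (fun t => g t * g t) (-1) 1
          + M / 2 / e * RInt (fun t => h t * h t) (-1) 1) by (field; lra).
  rewrite <- (RInt_lincomb (fun t => M / 2 * e * (g t * g t) + M / 2 / e * (h t * h t)));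
    [| apply continuous_everywhere_mult; auto | apply continuous_everywhere_mult; auto
     | reflexivity].
  apply RInt_le; [lra | | |].
  - apply (@ex_RInt_continuous R_CompleteNormedModule). intros x Hx.
    apply continuous_Rabs_comp. auto.
  - apply ex_RInt_everywhere. unfold Rdiv.
    apply continuous_everywhere_plus;
      apply (continuous_everywhere_mult (fun _ => _)), continuous_everywhere_mult; auto;
      apply continuous_everywhere_const.
  - intros x Hx. apply abs_product_le_amgm; [apply HM; lra | exact He].
Qed.

Lemma pseries_terms_bounded (a : nat -> R) z l :
  is_pseries a z l -> exists M, forall n, Rabs (a n * z ^ n) <= M.
Proof.
  intros H.
  assert (Hlim : is_lim_seq (fun k => scal (pow_n z k) (a k)) 0)
    by (apply ex_series_lim_0; exists l; exact H).
  destruct (@filterlim_bounded R_AbsRing R_NormedModule (fun k => scal (pow_n z k) (a k)))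
    as [M HM]; [exists 0; exact Hlim|].
  exists M. intros n. specialize (HM n).
  unfold norm, scal in HM; simpl in HM. unfold mult in HM; simpl in HM.
  rewrite pow_n_pow in HM. rewrite Rmult_comm. exact HM.
Qed.

(* A function analytic on [-1,1] is continuous there: near each point it is
   the sum of a power series with positive radius of convergence. *)
Lemma analytic_continuous (ft : R -> R) :
  analytic_on_interval ft -> forall x, -1 <= x <= 1 -> continuous ft x.
Proof.
  intros Han x Hx.
  destruct (Han x Hx) as [a [r [Hr Hs]]].
  assert (Hz : Rabs ((x + r / 2) - x) < r)
    by (replace (x + r / 2 - x) with (r / 2) by ring; rewrite Rabs_pos_eq; lra).
  destruct (pseries_terms_bounded a _ _ (Hs _ Hz)) as [M HM].
  assert (Hradius : Rbar_le (r / 2) (CV_radius a)).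
  { apply (proj1 (CV_radius_bounded a)). exists M.
    intros n. replace (r / 2) with (x + r / 2 - x) by ring. apply HM. }
  apply continuous_ext_loc with (fun y => PSeries a (y - x)).
  - assert (Hp : 0 < r / 2) by lra.
    exists (mkposreal _ Hp). intros y Hy.
    unfold ball in Hy; simpl in Hy. unfold AbsRing_ball, abs, minus, plus, opp in Hy; simpl in Hy.
    apply is_pseries_unique, Hs. replace (y - x) with (y + - x) by ring. lra.
  - apply continuity_pt_filterlim.
    apply (continuity_pt_comp (fun y => y - x) (PSeries a)).
    + apply continuity_pt_minus; [apply continuity_pt_id | apply continuity_pt_const].
      intros u v; auto.
    + apply PSeries_continuity. rewrite Rminus_diag, Rabs_R0.
      apply Rbar_lt_le_trans with (r / 2); [simpl; lra | exact Hradius].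
Qed.

Theorem corollary3p3 (ft : R -> R) (m : Z) :
  analytic_on_interval ft ->
  exists (C : R) (L : nat),
    forall l : nat, (L <= l)%nat ->
      Rabs (coef_matrix (fun t s => ft t * Heaviside (t - s))
                        (Z.to_nat (Z.of_nat l + m)) l) <= C / INR l.
Proof.
  intros Han.
  pose proof (analytic_continuous ft Han) as Hcont.
  destruct (@bounded_continuity R_AbsRing R_NormedModule ft (-1) 1) as [M HM];
    [intros; apply Hcont; lra|].
  assert (HMle : forall x, -1 <= x <= 1 -> Rabs (ft x) <= M)
    by (intros x Hx; left; exact (HM x Hx)).
  exists (3 * M / 2), 1%nat. intros l Hl.
  destruct l as [|n]; [lia|].
  set (k := Z.to_nat (Z.of_nat (S n) + m)).
  assert (HL : 0 < INR (S n)) by (apply lt_0_INR; lia).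
  rewrite coef_matrix_volterra.
  eapply Rle_trans.
  { apply (RInt_product_bound ft (legendre_on k) (legendre_primitive n) M (/ INR (S n)));
      auto using legendre_on_continuous, legendre_primitive_continuous, Rinv_0_lt_compat. }
  rewrite legendre_on_norm.
  pose proof (legendre_primitive_norm n) as Hprim.
  pose proof (Rle_trans _ _ _ (Rabs_pos (ft 0)) (HMle 0 ltac:(lra))) as HM0.
  apply Rle_trans with (M / 2 * (/ INR (S n) * 1 + 2 / (INR (S n) * INR (S n)) / / INR (S n))).
  - apply Rmult_le_compat_l; [lra|]. apply Rplus_le_compat_l.
    apply Rmult_le_compat_r; [left; apply Rinv_0_lt_compat, Rinv_0_lt_compat; exact HL|].
    exact Hprim.
  - right. field. lra.
Qed.
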